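(* Let $n$ be a positive integer, $x\in\Gamma_n$ and $z\in\{r,b\}^n$. Then \[ \tilde\xi_n(x,z)=\xi_n\bigl(\sigma_{\mathrm{RF}}(x)\bigr)-\mathrm{wt}_{G_x}(z). \]
   Context: Let $[n]=\{1,\dots,n\}$. $\Gamma_n$ is the set of words $x=(x_1,\dots,x_{2n})\in[n]^{2n}$ in which every symbol of $[n]$ occurs exactly twice. Colours are formal symbols $r,b$; $\neg$ swaps them, $\neg^0$ is the identity, $\neg^1=\neg$. $[\,\cdot\,]$ is the Iverson bracket. For $f\in\{r,b\}^{2n}$, $\xi_n(f)=\sum_{i=1}^{2n-1}[f_i\neq f_{i+1}]$. For $z\in\{r,b\}^n$, $\mathcal E_n(x,z)_i=\neg^{[x_i\in\{x_1,\dots,x_{i-1}\}]}z_{x_i}$ ($i\in[2n]$) and $\tilde\xi_n(x,z)=\xi_n(\mathcal E_n(x,z))$. The red-first colouring $\sigma_{\mathrm{RF}}(x)$ has $i$-th entry $r$ if $x_i\notin\{x_1,\dots,x_{i-1}\}$ and $b$ otherwise. For $i\in[2n-1]$, $\eta(x,i)=[x_{i+1}\in\{x_1,\dots,x_i\}]\oplus[x_i\in\{x_1,\dots,x_{i-1}\}]$. For $e\subseteq[n]$, $\theta_x(e)=-\sum_{i=1}^{2n-1}(-1)^{\eta(x,i)}\delta_{e,\{x_i,x_{i+1}\}}$. The BPSP graph $G_x=(V_x,E_x,W_x)$ has $V_x=[n]$, $E_x=\{\{x_i,x_{i+1}\}: i\in[2n-1],\ x_i\neq x_{i+1},\ \theta_x(\{x_i,x_{i+1}\})\neq0\}$,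 $W_x=\theta_x|_{E_x}$. $\mathrm{wt}_{G_x}(z)=\sum_{\{i,j\}\in E_x}W_x(\{i,j\})[z_i\neq z_j]$. *)

From HB Require Import structures.
From mathcomp Require Import all_boot all_order all_algebra.
Set Implicit Arguments. Unset Strict Implicit. Unset Printing Implicit Defensive.
Import Order.TTheory GRing.Theory Num.Theory.

Inductive colour := r | b.
Definition colour_eqb (c d : colour) : bool :=
  match c, d with r, r | b, b => true | _, _ => false end.
Lemma colour_eqP : Equality.axiom colour_eqb.
Proof. by case; case; constructor. Qed.
HB.instance Definition _ := hasDecEq.Build colour colour_eqP.

Definition cneg (c : colour) : colour := match c with r => b | b => r end.
Definition cnegp (e : bool) (c : colour) : colour := if e then cneg c else c.

(* Words are seq nat with symbols in [n] = {1,...,n}; positions are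
   0-indexed internally: position i of the paper is index i-1 here. *)
Definition Gamma (n : nat) (x : seq nat) : Prop :=
  size x = (2 * n)%N /\ all (fun k => 0 < k <= n) x /\
  (forall k, 0 < k <= n -> count_mem k x = 2%N).

(* z ∈ {r,b}^n ; z_k (1 <= k <= n) is the (k-1)-th entry of the tuple *)
Definition zat (n : nat) (z : n.-tuple colour) (k : nat) : colour := nth r z k.-1.

Definition xi (n : nat) (f : seq colour) : nat :=
  \sum_(0 <= i < (2 * n).-1) (nth r f i != nth r f i.+1).

Definition seen (x : seq nat) (i : nat) : bool := nth 0 x i \in take i x.

Definition Enc (n : nat) (x : seq nat) (z : n.-tuple colour) : seq colour :=
  mkseq (fun i => cnegp (seen x i) (zat z (nth 0 x i))) (2 * n).

Definition xi_tilde (n : nat) (x : seq nat) (z : n.-tuple colour) : nat :=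
  xi n (Enc x z).

Definition sigmaRF (n : nat) (x : seq nat) : seq colour :=
  mkseq (fun i => if seen x i then b else r) (2 * n).

Definition eta (x : seq nat) (i : nat) : bool := seen x i.+1 (+) seen x i.

Definition is_pair (x : seq nat) (i u v : nat) : bool :=
  ((u == nth 0 x i) && (v == nth 0 x i.+1)) ||
  ((u == nth 0 x i.+1) && (v == nth 0 x i)).

Definition theta (n : nat) (x : seq nat) (u v : nat) : int :=
  - \sum_(0 <= i < (2 * n).-1) ((-1) ^+ eta x i * (is_pair x i u v)%:R)%R.

Definition edgeb (n : nat) (x : seq nat) (u v : nat) : bool :=
  [&& u < v,
      [exists i : 'I_((2 * n).-1), (nth 0 x i != nth 0 x i.+1) && is_pair x i u v]
    & theta n x u v != 0%R].

(* wt_{G_x}(z) = sum_{{u,v} in E_x} W_x({u,v}) [z_u != z_v] ;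
   each unordered edge counted once via u < v, vertices in [n]. *)
Definition wt (n : nat) (x : seq nat) (z : n.-tuple colour) : int :=
  \sum_(1 <= u < n.+1) \sum_(1 <= v < n.+1 | edgeb n x u v)
     (theta n x u v * (zat z u != zat z v)%:R)%R.

(* Write E_i = ¬^{s_i} z_{x_i} with s_i = [x_i already seen].  Checking the
   four values of (s_i, s_{i+1}) gives
     [E_i ≠ E_{i+1}] = [s_i ≠ s_{i+1}] + (-1)^{s_i ⊕ s_{i+1}} [z_{x_i} ≠ z_{x_{i+1}}],
   and the red-first colouring is exactly i ↦ ¬^{s_i} r.  Summing over i, the
   first terms give ξ(σ_RF(x)); the signed terms, regrouped according to the
   unordered pair {x_i, x_{i+1}}, collect the coefficients -θ_x, so they sum
   to -wt_{G_x}(z): pairs outside E_x either have θ_x = 0 or are loops,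
   which do not contribute since [z_u ≠ z_u] = 0. *)
From mathcomp Require Import all_boot all_order all_algebra zify.
Import GRing.Theory Num.Theory.
Local Open Scope ring_scope.

Lemma cnegp_neq (s t : bool) (c d : colour) :
  (cnegp s c != cnegp t d)%:Z =
  ((if s then b else r) != (if t then b else r))%:Z + (-1) ^+ (t (+) s) * (c != d)%:R.
Proof. by case: s; case: t; case: c; case: d. Qed.

Lemma lt_unordered_pairE (p q u v : nat) :
  (u < v)%N && (((u == p) && (v == q)) || ((u == q) && (v == p))) =
  [&& u == minn p q, v == maxn p q & p != q].
Proof. by apply/idP/idP; lia. Qed.

Lemma sum_lt_unordered_pair (V : nmodType) (m p q : nat) (F : nat -> nat -> V) :
  (0 < p <= m)%N -> (0 < q <= m)%N -> F p q = F q p ->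
  \sum_(1 <= u < m.+1) \sum_(1 <= v < m.+1)
     (if (u < v)%N && (((u == p) && (v == q)) || ((u == q) && (v == p)))
      then F u v else 0)
  = if p == q then 0 else F p q.
Proof.
move=> hp hq Fsym; under eq_bigr do under eq_bigr do rewrite lt_unordered_pairE.
have [->|neq_pq] := eqVneq p q.
  by rewrite big1 // => u _; rewrite big1 // => v _; rewrite !andbF.
have min_in : minn p q \in index_iota 1 m.+1 by rewrite mem_iota; lia.
have max_in : maxn p q \in index_iota 1 m.+1 by rewrite mem_iota; lia.
rewrite (bigD1_seq _ min_in (iota_uniq _ _)) (bigD1_seq _ max_in (iota_uniq _ _)).
rewrite /= !eqxx /= [X in _ + X]big1 => [|u /negbTE->]; last by rewrite big1.
rewrite big1 => [|v /negbTE->//]; rewrite !addr0.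
by case: ltngtP neq_pq.
Qed.

Lemma Gamma_nth (n : nat) (x : seq nat) (i : nat) :
  Gamma n x -> (i < 2 * n)%N -> (0 < nth 0 x i <= n)%N.
Proof.
by case=> size_x [/allP all_x _] hi; apply: all_x; rewrite mem_nth ?size_x.
Qed.

Lemma is_pair_neq {x : seq nat} {i u v : nat} :
  (u < v)%N -> is_pair x i u v -> nth 0 x i != nth 0 x i.+1.
Proof. by rewrite /is_pair => uv; case/orP=> /andP[/eqP<- /eqP<-]; lia. Qed.

Lemma theta_eq0 (n : nat) (x : seq nat) (u v : nat) :
  (u < v)%N -> ~~ edgeb n x u v -> theta n x u v = 0.
Proof.
rewrite /edgeb => uv; rewrite uv /= => /nandP[/existsPn no_edge|/negPn/eqP//].
rewrite /theta big_nat_cond big1 ?oppr0 // => i /andP[/andP[_ hi] _].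
have /negbTE-> : ~~ is_pair x i u v.
  apply: contra (no_edge (Ordinal hi)) => pair_i.
  by rewrite /= pair_i (is_pair_neq uv).
by rewrite mulr0.
Qed.

Definition signed_colour_changes {n : nat} (x : seq nat) (z : n.-tuple colour) : int :=
  \sum_(0 <= i < (2 * n).-1)
     (-1) ^+ eta x i * (zat z (nth 0 x i) != zat z (nth 0 x i.+1))%:R.

Lemma wt_ltE (n : nat) (x : seq nat) (z : n.-tuple colour) :
  wt x z = \sum_(1 <= u < n.+1) \sum_(1 <= v < n.+1)
             (if (u < v)%N then theta n x u v * (zat z u != zat z v)%:R else 0).
Proof.
apply: eq_bigr => u _; rewrite big_mkcond; apply: eq_bigr => v _.
case: (ltnP u v) => uv; case edge_uv: (edgeb n x u v) => //.
- by rewrite theta_eq0 ?edge_uv // mul0r.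
- by move: edge_uv; rewrite /edgeb ltnNge uv.
Qed.

Lemma wt_signed_colour_changes (n : nat) (x : seq nat) (z : n.-tuple colour) :
  Gamma n x -> wt x z = - signed_colour_changes x z.
Proof.
move=> Gx; pose c u v : int := (zat z u != zat z v)%:R.
rewrite wt_ltE; transitivity (\sum_(1 <= u < n.+1) \sum_(1 <= v < n.+1)
  - \sum_(0 <= i < (2 * n).-1)
      (-1) ^+ eta x i * (if (u < v)%N && is_pair x i u v then c u v else 0)).
  apply: eq_bigr => u _; apply: eq_bigr => v _; case: ltnP => uv /=.
    rewrite /theta mulNr mulr_suml; congr (- _); apply: eq_bigr => i _.
    by rewrite -mulrA; case: is_pair; rewrite ?mul1r ?mul0r.
  by under eq_bigr do rewrite mulr0; rewrite big1_eq oppr0.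
under eq_bigr do rewrite sumrN exchange_big; rewrite sumrN exchange_big.
congr (- _); rewrite big_nat_cond [RHS]big_nat_cond.
apply: eq_bigr => i /andP[/andP[_ hi] _].
under eq_bigr do rewrite -mulr_sumr; rewrite -mulr_sumr; congr (_ * _).
rewrite sum_lt_unordered_pair ?Gamma_nth //; [|lia|lia|by rewrite /c /= eq_sym].
by case: eqP => [->|_]; rewrite ?eqxx.
Qed.

Lemma xi_tilde_signed_colour_changes (n : nat) (x : seq nat) (z : n.-tuple colour) :
  (xi_tilde x z)%:Z = (xi n (sigmaRF n x))%:Z + signed_colour_changes x z.
Proof.
rewrite /xi_tilde /xi !(big_morph Posz PoszD (erefl 0%:Z)) -big_split /=.
rewrite big_nat_cond [RHS]big_nat_cond; apply: eq_bigr => i /andP[/andP[_ hi] _].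
have [i_lt i1_lt] : (i < 2 * n)%N /\ (i.+1 < 2 * n)%N by lia.
by rewrite /Enc /sigmaRF !nth_mkseq // cnegp_neq.
Qed.

Theorem proposition7 (n : nat) (x : seq nat) (z : n.-tuple colour) :
  (0 < n)%N -> Gamma n x ->
  ((xi_tilde x z)%:Z = (xi n (sigmaRF n x))%:Z - wt x z)%R.
Proof.
move=> _ Gx.
by rewrite xi_tilde_signed_colour_changes wt_signed_colour_changes // opprK.
Qed.
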